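(* Let $G=(V,E)$ be a finite undirected unweighted simple graph and let $u\in V$. Let $\mathcal{F}$ be the set of all spanning rooted forests of $G$, let $\mathcal{F}_{uu}$ be the set of spanning rooted forests of $G$ in which $u$ is a root, and define $$\mathcal{S}_u=\{(F,v^* )\;:\;F\in\mathcal{F}_{uu},\ v^*\in T(F,u)\},$$ where $T(F,u)$ denotes the tree of $F$ rooted at $u$ (so $v^*$ ranges over the vertices of that tree). Then $|\mathcal{S}_u|=|\mathcal{F}|$.
   Context: A spanning forest of $G=(V,E)$ is an acyclic subgraph $(V,E')$ with $E'\subseteq E$ (same vertex set as $G$); each connected component is a tree. A spanning rooted forest is a spanning forest together with a choice of one root vertex in each of its trees. Two spanning rooted forests are equal iff they have the same edge set and the same set of roots. *)

From mathcomp Require Import all_boot.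
From mathcomp Require Export boolp.
Set Implicit Arguments. Unset Strict Implicit. Unset Printing Implicit Defensive.

(* A finite simple graph: vertex type T (a finType), adjacency e : rel T,
   assumed symmetric and irreflexive (hypotheses of the theorem). *)

Section Forests.
Variable T : finType.

Definition graph_edges (e : rel T) : {set {set T}} :=
  [set [set x; y] | x in T, y in T & e x y].

Definition eadj (F : {set {set T}}) : rel T :=
  [rel x y | (x != y) && ([set x; y] \in F)].

Definition is_cycle (F : {set {set T}}) (c : seq T) : bool :=
  (2 < size c) && ucycleb (eadj F) c.

Definition acyclic (F : {set {set T}}) : Prop :=
  forall c : seq T, ~~ is_cycle F c.

Definition spanning_forest (e : rel T) (F : {set {set T}}) : Prop :=
  F \subset graph_edges e /\ acyclic F.

Definition spanning_rooted_forest (e : rel T)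
    (p : {set {set T}} * {set T}) : Prop :=
  spanning_forest e p.1 /\
  forall v : T, #|[set r in p.2 | connect (eadj p.1) v r]| = 1.

End Forests.

From mathcomp Require Import all_boot boolp.
Set Implicit Arguments. Unset Strict Implicit.

(* Moving the root of the tree of u from u to v sends (F, R, v) in S_u to the
   rooted forest (F, R - u + v).  This is a bijection: a rooted forest goes
   back by moving the root of the tree of u to u, the old root becoming the
   distinguished vertex. *)

Section RootSets.
Variables (T : finType) (g : rel T).

Definition root_set (R : {set T}) : Prop :=
  forall w, #|[set r in R | connect g w r]| = 1.

Variable R : {set T}.
Hypothesis R_roots : root_set R.

Lemma root_set_ex w : exists2 r, r \in R & connect g w r.
Proof.
have /cards1P [r Er] : #|[set r in R | connect g w r]| == 1 by rewrite R_roots.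
by have := set11 r; rewrite -Er inE => /andP [rR wr]; exists r.
Qed.

Lemma root_set_eq a b : a \in R -> b \in R -> connect g a b -> a = b.
Proof.
move=> aR bR ab.
have /cards1P [r Er] : #|[set r in R | connect g a r]| == 1 by rewrite R_roots.
have : a \in [set r in R | connect g a r] by rewrite inE aR connect0.
have : b \in [set r in R | connect g a r] by rewrite inE bR ab.
by rewrite Er !inE => /eqP -> /eqP ->.
Qed.

Lemma root_set_swapK a b : a \in R -> connect g a b ->
  a |: ((b |: R :\ a) :\ b) = R.
Proof.
move=> aR ab; apply/setP => r; rewrite !inE.
have [-> | ra] //= := eqVneq r a.
have [rb | //] /= := eqVneq r b; subst r.
by apply/esym/negbTE/negP => bR; rewrite (root_set_eq aR bR ab) eqxx in ra.
Qed.

Hypothesis g_sym : symmetric g.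

Lemma root_set_swap a b : a \in R -> connect g a b -> root_set (b |: R :\ a).
Proof.
move=> aR ab w; have [wa | wNa] := boolP (connect g w a).
  suff -> : [set r in b |: R :\ a | connect g w r] = [set b] by rewrite cards1.
  apply/setP => r; rewrite !inE; have [-> | rb] /= := eqVneq r b.
    exact: connect_trans wa ab.
  apply/negbTE/andP => -[/andP [ra rR] wr].
  have ar : connect g a r.
    by apply: connect_trans wr; rewrite (sym_connect_sym g_sym).
  by rewrite (root_set_eq aR rR ar) eqxx in ra.
have wNb : connect g w b = false.
  apply/negbTE/negP => wb; case/negP: wNa.
  by apply: connect_trans wb _; rewrite (sym_connect_sym g_sym).
rewrite -(R_roots w); apply: eq_card => r; rewrite !inE.
have [-> | rb] /= := eqVneq r b; first by rewrite wNb andbF.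
by have [-> | //] := eqVneq r a; rewrite (negbTE wNa) !andbF.
Qed.

End RootSets.

Lemma eadj_sym (T : finType) (F : {set {set T}}) : symmetric (eadj F).
Proof. by move=> x y; rewrite /eadj /= eq_sym setUC. Qed.

Theorem lemma4p4 (T : finType) (e : rel T)
  (e_sym : symmetric e) (e_irr : irreflexive e) (u : T) :
  #|[set Sv : ({set {set T}} * {set T}) * T |
      `[< spanning_rooted_forest e Sv.1 >] && (u \in Sv.1.2) &&
      connect (eadj Sv.1.1) u Sv.2]|
  = #|[set p : {set {set T}} * {set T} | `[< spanning_rooted_forest e p >]]|.
Proof.
set S_u := [set Sv | _].
pose f (Sv : {set {set T}} * {set T} * T) := (Sv.1.1, Sv.2 |: Sv.1.2 :\ u).
have f_inj : {in S_u &, injective f}.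
  move=> [[F R] v] [[F' R'] v']; rewrite !inE /f /=.
  move=> /andP [/andP [/asboolP [_ /= R_roots] uR] uv].
  move=> /andP [/andP [/asboolP [_ /= R'_roots] uR'] uv'] [EF eqR].
  subst F'.
  have v'v : v' = v.
    apply: (root_set_eq (root_set_swap R_roots (eadj_sym F) uR uv)).
    - by rewrite eqR setU11.
    - exact: setU11.
    - by apply: connect_trans _ uv; rewrite (sym_connect_sym (eadj_sym F)).
  subst v'; rewrite -(root_set_swapK R_roots uR uv) eqR.
  by rewrite (root_set_swapK R'_roots uR' uv').
rewrite -(card_in_imset f_inj); apply: eq_card => -[F R].
rewrite inE; apply/imsetP/asboolP => [[[[F' R'] v]] | [F_forest /= R_roots]].
  rewrite inE => /andP [/andP [/asboolP [F'_forest /= R'_roots] uR'] uv].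
  case=> -> ->.
  by split=> //; exact: (root_set_swap R'_roots (eadj_sym F') uR' uv).
have [r rR ur] := root_set_ex R_roots u.
have ru : connect (eadj F) r u by rewrite (sym_connect_sym (eadj_sym F)).
exists (F, u |: R :\ r, r).
  rewrite inE /= setU11 ur !andbT; apply/asboolP; split => //.
  exact: (root_set_swap R_roots (eadj_sym F) rR ru).
by rewrite /f /= (root_set_swapK R_roots rR ru).
Qed.
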